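(* With $\phi$, $M$, $\mu$ as constructed below, $$\phi\otimes\phi(x)\sim 2M\int_x^{x+1}\phi(u)\,du=2M^2\mu((x,x+1])\quad (x\to\infty).$$
   Context: $f(x)\sim g(x)$ means $\lim_{x\to\infty}f(x)/g(x)=1$; $f\otimes g(x):=\int_{-\infty}^\infty f(x-u)g(u)\,du$. Construction: fix $1<x_0<b$ and $\delta\in(0,1)$ with $\delta<\min(x_0-1,\,b-x_0)$. Let $h$ be a continuous periodic function on $\mathbb{R}$ with period $\log b$ such that $h(\log x)>0$ for $x\in[1,x_0)\cup(x_0,b]$, $h(\log x_0)=0$, and $h(\log x)=-1/\log|x-x_0|$ for $0<|x-x_0|<\delta$. For $\alpha>0$ let $\phi(x):=x^{-\alpha-1}h(\log x)\mathbf{1}_{[1,\infty)}(x)$, $M:=\int_1^\infty x^{-1-\alpha}h(\log x)\,dx$, and $\mu(dx):=M^{-1}\phi(x)\,dx$. *)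

From Stdlib Require Import Reals Lra ClassicalEpsilon.
Open Scope R_scope.

Definition integrable_on (f : R -> R) (a b : R) : Prop :=
  inhabited (Riemann_integrable f a b).

(* the (proper) Riemann integral \int_a^b f, as a total function
   (meaningful when f is integrable on [a,b]; value is proof-independent) *)
Definition RInt (f : R -> R) (a b : R) : R :=
  epsilon (inhabits 0)
    (fun l => exists pr : Riemann_integrable f a b, RiemannInt pr = l).

Definition is_improper_int_from (f : R -> R) (a l : R) : Prop :=
  (forall b, a <= b -> integrable_on f a b) /\
  (forall eps, 0 < eps -> exists N, forall b, N <= b ->
      Rabs (RInt f a b - l) < eps).

Definition improper_int_from (f : R -> R) (a : R) : R :=
  epsilon (inhabits 0) (fun l => is_improper_int_from f a l).

Definition is_improper_int (f : R -> R) (l : R) : Prop :=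
  (forall a b, a <= b -> integrable_on f a b) /\
  (forall eps, 0 < eps -> exists N, forall a b, a <= - N -> N <= b ->
      Rabs (RInt f a b - l) < eps).

Definition improper_int (f : R -> R) : R :=
  epsilon (inhabits 0) (fun l => is_improper_int f l).

Definition conv (f g : R -> R) (x : R) : R :=
  improper_int (fun u => f (x - u) * g u).

Definition asymp (f g : R -> R) : Prop :=
  forall eps, 0 < eps -> exists N, forall x, N <= x ->
    Rabs (f x / g x - 1) < eps.

Definition phi_fun (alpha : R) (h : R -> R) (x : R) : R :=
  if Rle_dec 1 x then Rpower x (- alpha - 1) * h (ln x) else 0.

Definition M_const (alpha : R) (h : R -> R) : R :=
  improper_int_from (fun x => Rpower x (- 1 - alpha) * h (ln x)) 1.

(* mu((x,y]) for mu(dx) = M^{-1} phi(x) dx (absolutely continuous, so the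
   endpoint convention is immaterial) *)
Definition mu_Ioc (alpha : R) (h : R -> R) (x y : R) : R :=
  / M_const alpha h * RInt (phi_fun alpha h) x y.

(* [h o ln] is continuous, log-periodic and positive except at the points
   [x0 b^n], where it vanishes only logarithmically.  Hence on the
   window [[x - x^th, x + 1]] it is, up to a factor [1 +- e], a constant
   [c >= 1 / ln x]: away from [x0 b^n] by uniform continuity at the scale [b^n],
   and near it because the logarithm varies little, except within distance [e]
   of [x0 b^n].  So [phi] is nearly [c x^(-alpha-1)] there.  Splitting the
   convolution at [A = x^th], the two (symmetric) end pieces are each
   [~ c x^(-alpha-1) int_1^A phi ~ c x^(-alpha-1) M], the middle piece is
   [O(x^(-alpha-1) A^(-alpha)) = o(x^(-alpha-1) / ln x)], and
   [int_x^(x+1) phi ~ c x^(-alpha-1)]; the exceptional [e]-window costs [O(e)]. *)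

From Pilot Require Import Defs.
From Stdlib Require Import Reals Lra Lia ZArith ClassicalEpsilon.
From Coquelicot Require Import Coquelicot.
Open Scope R_scope.

Notation at_top := (Rbar_locally p_infty).

Lemma RInt_Defs (f : R -> R) a b : ex_RInt f a b -> Defs.RInt f a b = RInt f a b.
Proof.
  intros H. unfold Defs.RInt.
  assert (E : exists l, exists pr : Riemann_integrable f a b, RiemannInt pr = l).
  { exists (RiemannInt (ex_RInt_Reals_0 _ _ _ H)). eexists; reflexivity. }
  destruct (epsilon_spec (inhabits 0) _ E) as [pr <-].
  symmetry. apply RInt_Reals.
Qed.

Lemma integrable_on_ex_RInt (f : R -> R) a b : ex_RInt f a b -> integrable_on f a b.
Proof. intros H. constructor. exact (ex_RInt_Reals_0 _ _ _ H). Qed.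

Lemma eq_of_common_approx (l1 l2 : R) :
  (forall eps, 0 < eps -> exists v, Rabs (v - l1) < eps /\ Rabs (v - l2) < eps) -> l1 = l2.
Proof.
  intros H. destruct (Req_dec l1 l2) as [E|Hne]; [exact E|].
  assert (Hp : 0 < Rabs (l1 - l2)) by (apply Rabs_pos_lt; lra).
  destruct (H (Rabs (l1 - l2) / 2) ltac:(lra)) as [v [H1 H2]].
  assert (Rabs (l1 - l2) <= Rabs (v - l2) + Rabs (v - l1)).
  { replace (l1 - l2) with ((v - l2) + - (v - l1)) by ring.
    eapply Rle_trans; [apply Rabs_triang|rewrite Rabs_Ropp; lra]. }
  lra.
Qed.

Lemma improper_int_from_eq f a l : is_improper_int_from f a l -> improper_int_from f a = l.
Proof.
  intros Hl. unfold improper_int_from.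
  assert (Hex : exists l', is_improper_int_from f a l') by (exists l; exact Hl).
  destruct (epsilon_spec (inhabits 0) _ Hex) as [_ H1]. destruct Hl as [_ H2].
  apply eq_of_common_approx. intros eps He.
  destruct (H1 eps He) as [N1 HN1], (H2 eps He) as [N2 HN2].
  exists (Defs.RInt f a (Rmax N1 N2)).
  split; [apply HN1, Rmax_l|apply HN2, Rmax_r].
Qed.

Lemma improper_int_eq f l : is_improper_int f l -> improper_int f = l.
Proof.
  intros Hl. unfold improper_int.
  assert (Hex : exists l', is_improper_int f l') by (exists l; exact Hl).
  destruct (epsilon_spec (inhabits 0) _ Hex) as [_ H1]. destruct Hl as [_ H2].
  apply eq_of_common_approx. intros eps He.
  destruct (H1 eps He) as [N1 HN1], (H2 eps He) as [N2 HN2].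
  pose proof (Rmax_l N1 N2). pose proof (Rmax_r N1 N2).
  exists (Defs.RInt f (- Rmax N1 N2) (Rmax N1 N2)). split; [apply HN1|apply HN2]; lra.
Qed.

Lemma RInt_scal_R (f : R -> R) k a b :
  ex_RInt f a b -> RInt (fun x => k * f x) a b = k * RInt f a b.
Proof. exact (RInt_scal (V := R_CompleteNormedModule) f a b k). Qed.

Lemma ex_RInt_open_ext (f g : R -> R) a b : a <= b ->
  (forall z, a <= z <= b -> continuous g z) ->
  (forall z, a < z < b -> f z = g z) -> ex_RInt f a b.
Proof.
  intros Hab Hc He. apply ex_RInt_ext with g.
  - intros z. rewrite Rmin_left, Rmax_right by lra. intros Hz. symmetry; apply He; exact Hz.
  - apply (ex_RInt_continuous (V := R_CompleteNormedModule)).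
    intros z. rewrite Rmin_left, Rmax_right by lra. apply Hc.
Qed.

Lemma ex_RInt_zero_open (f : R -> R) a b :
  a <= b -> (forall z, a < z < b -> f z = 0) -> ex_RInt f a b.
Proof. intros Hab Hz. apply (ex_RInt_open_ext f (fun _ => 0)); auto using continuous_const. Qed.

Lemma RInt_zero_open (f : R -> R) a b :
  a <= b -> (forall z, a < z < b -> f z = 0) -> RInt f a b = 0.
Proof.
  intros Hab Hz. rewrite (RInt_ext f (fun _ => 0)), RInt_const.
  - apply Rmult_0_r.
  - intros z. rewrite Rmin_left, Rmax_right by lra. apply Hz.
Qed.

Lemma ex_RInt_subinterval (f : R -> R) a b a' b' :
  a' <= a -> a <= b -> b <= b' -> ex_RInt f a' b' -> ex_RInt f a b.
Proof.
  intros Ha Hab Hb H.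
  apply (ex_RInt_Chasles_2 (V := R_CompleteNormedModule) f a'); [lra|].
  apply (ex_RInt_Chasles_1 (V := R_CompleteNormedModule) f a' b b'); [lra|exact H].
Qed.

Lemma RInt_le_const (f : R -> R) a b K :
  a <= b -> ex_RInt f a b -> (forall z, a < z < b -> f z <= K) -> RInt f a b <= K * (b - a).
Proof.
  intros Hab Hf Hz. apply Rle_trans with (RInt (fun _ => K) a b).
  - apply RInt_le; auto using ex_RInt_const.
  - rewrite RInt_const. change ((b - a) * K <= K * (b - a)). lra.
Qed.

Lemma ex_RInt_reflect (k : R -> R) x a b :
  ex_RInt k a b -> ex_RInt (fun u => k (x - u)) (x - a) (x - b).
Proof.
  intros H.
  assert (H1 := @ex_RInt_comp_lin R_NormedModule k (-1) x (x - a) (x - b)).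
  replace (-1 * (x - a) + x) with a in H1 by ring.
  replace (-1 * (x - b) + x) with b in H1 by ring.
  eapply ex_RInt_ext; [|exact (@ex_RInt_scal R_NormedModule _ _ _ (-1) (H1 H))].
  intros z _. assert (E : -1 * (-1 * k (-1 * z + x)) = k (x - z))
    by (replace (-1 * z + x) with (x - z) by ring; ring).
  exact E.
Qed.

Lemma RInt_reflect (k : R -> R) x a b :
  ex_RInt k a b -> RInt (fun u => k (x - u)) (x - b) (x - a) = RInt k a b.
Proof.
  intros H. assert (Hk := ex_RInt_reflect k x a b H).
  assert (E := @RInt_comp_lin R_CompleteNormedModule k (-1) x (x - a) (x - b)).
  replace (-1 * (x - a) + x) with a in E by ring.
  replace (-1 * (x - b) + x) with b in E by ring.
  rewrite <- (E H), <- (@opp_RInt_swap R_CompleteNormedModule _ _ _ Hk),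
    <- (@RInt_opp R_CompleteNormedModule _ _ _ Hk).
  apply (@RInt_ext R_CompleteNormedModule). intros z _.
  assert (E' : - k (x - z) = -1 * k (-1 * z + x))
    by (replace (-1 * z + x) with (x - z) by ring; ring).
  exact E'.
Qed.

Ltac case_min_max := unfold Rmin, Rmax in *;
  repeat match goal with
  | |- context [Rle_dec ?x ?y] => destruct (Rle_dec x y)
  | H : context [Rle_dec ?x ?y] |- _ => destruct (Rle_dec x y)
  end.

(* The window [|u - q| < e], where [F] may be small, costs at most [2 e W0]. *)
Lemma RInt_mul_ge_off_window (w F : R -> R) a c q e W0 Lb :
  a <= c -> 0 < e -> 0 <= Lb -> 0 <= W0 ->
  (forall a' c', a <= a' -> a' <= c' -> c' <= c ->
     ex_RInt w a' c' /\ ex_RInt (fun u => w u * F u) a' c') ->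
  (forall u, a < u < c -> 0 <= w u <= W0 /\ 0 <= F u) ->
  (forall u, a < u < c -> e <= Rabs (u - q) -> Lb <= F u) ->
  Lb * (RInt w a c - 2 * e * W0) <= RInt (fun u => w u * F u) a c.
Proof.
  intros Hac He HL HW0 Hint Hpos Hlow.
  set (m1 := Rmax a (Rmin c (q - e))).
  set (m2 := Rmax m1 (Rmin c (q + e))).
  assert (Hm : a <= m1 <= m2 /\ m2 <= c /\ m2 - m1 <= 2 * e) by (unfold m2, m1; case_min_max; lra).
  assert (Hlt1 : forall u, a < u < m1 -> u < q - e) by (intros u; unfold m1; case_min_max; lra).
  assert (Hgt2 : forall u, m2 < u < c -> q + e < u) by (intros u; unfold m2, m1; case_min_max; lra).
  clearbody m1 m2.
  destruct (Hint a m1) as [Iw1 Iwf1], (Hint m1 m2) as [Iw2 Iwf2], (Hint m2 c) as [Iw3 Iwf3];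
    try lra.
  rewrite <- (RInt_Chasles w a m1 c), <- (RInt_Chasles w m1 m2 c),
    <- (RInt_Chasles _ a m1 c), <- (RInt_Chasles _ m1 m2 c);
    auto; try (apply ex_RInt_Chasles with m2; auto).
  assert (Side : forall a' c', a <= a' -> a' <= c' -> c' <= c ->
      (forall u, a' < u < c' -> e <= Rabs (u - q)) ->
      Lb * RInt w a' c' <= RInt (fun u => w u * F u) a' c').
  { intros a' c' H1 H2 H3 Hfar. destruct (Hint a' c' H1 H2 H3) as [Iw Iwf].
    rewrite <- RInt_scal_R by exact Iw. apply RInt_le; auto.
    - apply (ex_RInt_scal (V := R_NormedModule)). exact Iw.
    - intros u Hu. destruct (Hpos u ltac:(lra)) as [[W1 _] A3].
      assert (Lb <= F u) by (apply Hlow, Hfar; lra). nra. }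
  assert (B1 : Lb * RInt w a m1 <= RInt (fun u => w u * F u) a m1).
  { apply Side; try lra. intros u Hu.
    specialize (Hlt1 u ltac:(lra)). rewrite Rabs_left by lra. lra. }
  assert (B3 : Lb * RInt w m2 c <= RInt (fun u => w u * F u) m2 c).
  { apply Side; try lra. intros u Hu.
    specialize (Hgt2 u ltac:(lra)). rewrite Rabs_right by lra. lra. }
  assert (B2 : 0 <= RInt (fun u => w u * F u) m1 m2).
  { apply RInt_ge_0; try lra; auto. intros u Hu.
    destruct (Hpos u ltac:(lra)) as [[] ?]. nra. }
  assert (B4 : RInt w m1 m2 <= W0 * (m2 - m1)).
  { apply RInt_le_const; try lra; auto. intros u Hu. apply Hpos; lra. }
  assert (Lb * RInt w m1 m2 <= Lb * (2 * e * W0)).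
  { apply Rmult_le_compat_l; nra. }
  unfold plus; simpl. nra.
Qed.

Lemma exp_le_exp x y : x <= y -> exp x <= exp y.
Proof. intros [H|H]; [apply Rlt_le, exp_increasing, H|subst; apply Rle_refl]. Qed.

Lemma continuous_Rpower a z : 0 < z -> continuous (fun u => Rpower u a) z.
Proof.
  intros Hz. apply continuity_pt_filterlim, derivable_continuous_pt.
  exists (a * Rpower z (a - 1)). apply derivable_pt_lim_power; exact Hz.
Qed.

Lemma Rpower_mul_le x a k : 0 < x -> Rpower x (- a) <= k -> Rpower x (1 - a) <= k * x.
Proof.
  intros Hx H. replace (1 - a) with (- a + 1) by ring.
  rewrite Rpower_plus, Rpower_1 by exact Hx. apply Rmult_le_compat_r; lra.
Qed.

(* One of [u], [v] is at least their mean. *)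
Lemma Rpower_mul_le_mid a u v : 0 <= a -> 0 < u -> 0 < v ->
  Rpower u (- a) * Rpower v (- a) <= Rpower ((u + v) / 2) (- a) * (Rpower v (- a) + Rpower u (- a)).
Proof.
  intros Ha Hu Hv.
  assert (Hmono : forall w, (u + v) / 2 <= w -> Rpower w (- a) <= Rpower ((u + v) / 2) (- a)).
  { intros w Hw. rewrite !Rpower_Ropp.
    apply Rinv_le_contravar; [apply exp_pos|]. apply Rle_Rpower_l; lra. }
  pose proof (exp_pos (- a * ln u)). pose proof (exp_pos (- a * ln v)).
  fold (Rpower u (- a)) in H. fold (Rpower v (- a)) in H0.
  destruct (Rle_dec u ((u + v) / 2)).
  - pose proof (Hmono v ltac:(lra)). nra.
  - pose proof (Hmono u ltac:(lra)). nra.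
Qed.

Lemma RInt_Rpower_neg alpha a c : 0 < alpha -> 0 < a -> a <= c ->
  RInt (fun u => Rpower u (- alpha - 1)) a c = (Rpower a (- alpha) - Rpower c (- alpha)) / alpha.
Proof.
  intros Hal Ha Hac. apply is_RInt_unique.
  replace ((Rpower a (- alpha) - Rpower c (- alpha)) / alpha) with
    (minus (- Rpower c (- alpha) / alpha) (- Rpower a (- alpha) / alpha))
    by (unfold minus, plus, opp; simpl; field; lra).
  apply (is_RInt_derive (V := R_CompleteNormedModule) (fun u => - Rpower u (- alpha) / alpha));
    intros x; rewrite Rmin_left, Rmax_right by lra; intros Hx.
  - apply is_derive_Reals.
    replace (Rpower x (- alpha - 1)) with (- / alpha * (- alpha * Rpower x (- alpha - 1)))
      by (field; lra).
    apply (derivable_pt_lim_ext (fun u => - / alpha * Rpower u (- alpha))).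
    { intros u. unfold Rdiv. ring. }
    apply derivable_pt_lim_scal, derivable_pt_lim_power. lra.
  - apply continuous_Rpower. lra.
Qed.

Lemma ln_le_sub_1 u : 0 < u -> ln u <= u - 1.
Proof. intros Hu. pose proof (exp_ineq1_le (ln u)). rewrite exp_ln in H by lra. lra. Qed.

Lemma Rabs_ln_le rho u : 0 <= rho <= 1/2 -> 1 - rho <= u <= 1 + rho -> Rabs (ln u) <= 2 * rho.
Proof.
  intros Hr Hu. pose proof (ln_le_sub_1 u ltac:(lra)).
  pose proof (ln_le_sub_1 (/ u) ltac:(apply Rinv_0_lt_compat; lra)) as Hinv.
  rewrite ln_Rinv in Hinv by lra.
  assert (/ u <= 1 + 2 * rho).
  { apply (Rmult_le_reg_r u); [lra|]. rewrite Rinv_l by lra. nra. }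
  apply Rabs_le; lra.
Qed.

Lemma one_le_ln_inv t : 0 < t <= 1/3 -> 1 <= ln (/ t).
Proof.
  intros Ht. rewrite <- (ln_exp 1). apply ln_le; [apply exp_pos|].
  apply Rle_trans with 3; [apply exp_le_3|].
  rewrite <- (Rinv_inv 3). apply Rinv_le_contravar; lra.
Qed.

Lemma Rabs_dist_shift x y p P : Rabs (y - x) <= P ->
  Rabs (x - p) - P <= Rabs (y - p) <= Rabs (x - p) + P.
Proof.
  intros Hyx. replace (y - p) with ((x - p) + (y - x)) by ring. split.
  - pose proof (Rabs_triang_inv (x - p) (- (y - x))). rewrite Rabs_Ropp in H.
    replace (x - p - - (y - x)) with ((x - p) + (y - x)) in H by ring. lra.
  - eapply Rle_trans; [apply Rabs_triang|lra].
Qed.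

Lemma Rabs_ln_dist_ratio_le x y p P : 0 < Rabs (x - p) -> 0 <= P <= Rabs (x - p) / 2 ->
  Rabs (y - x) <= P -> Rabs (ln (Rabs (y - p) / Rabs (x - p))) <= 2 * (P / Rabs (x - p)).
Proof.
  intros Hd HP Hyx. set (d := Rabs (x - p)) in *.
  apply Rabs_ln_le; [split; [apply Rdiv_le_0_compat|apply (Rmult_le_reg_r d)]|]; try lra.
  - field_simplify; lra.
  - pose proof (Rabs_dist_shift x y p P Hyx). fold d in H.
    split; apply (Rmult_le_reg_r d); try lra; field_simplify; lra.
Qed.

Lemma ln_le_Rpower x beta : 0 < x -> 0 < beta -> ln x <= (2 / beta) * Rpower x (beta / 2).
Proof.
  intros Hx Hb. pose proof (ln_le_sub_1 (Rpower x (beta / 2)) (exp_pos _)) as H.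
  rewrite ln_Rpower in H.
  apply (Rmult_le_reg_l (beta / 2)); [lra|]. field_simplify; lra.
Qed.

Lemma exp_near_0 t : Rabs t <= 1/2 -> 1 - Rabs t <= exp t <= 1 + 2 * Rabs t.
Proof.
  intros Ht. pose proof (exp_ineq1_le t). pose proof (exp_ineq1_le (- t)).
  assert (exp t * exp (- t) = 1) by (rewrite <- exp_plus, Rplus_opp_r; apply exp_0).
  pose proof (exp_pos t). pose proof (exp_pos (- t)).
  apply Rabs_le_between in Ht.
  destruct (Rle_dec 0 t).
  - rewrite Rabs_right by lra. split; [lra|nra].
  - rewrite Rabs_left by lra. split; [lra|].
    assert (exp t <= exp 0) by (apply exp_le_exp; lra). rewrite exp_0 in *. lra.
Qed.

Lemma Rpower_ratio a x y eta : 0 < x -> 0 < y -> 0 <= eta <= 1/2 ->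
  1 - eta <= y / x <= 1 + eta -> 2 * Rabs a * eta <= 1/4 ->
  (1 - 2 * Rabs a * eta) * Rpower x a <= Rpower y a <= (1 + 4 * Rabs a * eta) * Rpower x a.
Proof.
  intros Hx Hy He Hyx Ha.
  assert (E : Rpower y a = exp (a * ln (y / x)) * Rpower x a).
  { unfold Rdiv. rewrite ln_mult, ln_Rinv by (try apply Rinv_0_lt_compat; lra).
    unfold Rpower. rewrite <- exp_plus. f_equal. ring. }
  assert (Ht : Rabs (a * ln (y / x)) <= 2 * Rabs a * eta).
  { rewrite Rabs_mult. replace (2 * Rabs a * eta) with (Rabs a * (2 * eta)) by ring.
    apply Rmult_le_compat_l; [apply Rabs_pos|].
    exact (Rabs_ln_le eta (y / x) He Hyx). }
  destruct (exp_near_0 (a * ln (y / x)) ltac:(lra)).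
  rewrite E. pose proof (exp_pos (a * ln x)). fold (Rpower x a) in H1.
  split; apply Rmult_le_compat_r; lra.
Qed.

Lemma mul_almost_le e u U v V : 0 < e <= 1/2 ->
  0 <= u <= (1 + e / 3) * U -> 0 <= v <= (1 + e / 3) * V -> u * v <= (1 + e) * (U * V).
Proof.
  intros He Hu Hv. apply Rle_trans with (((1 + e / 3) * U) * ((1 + e / 3) * V)).
  - apply Rmult_le_compat; lra.
  - assert (0 <= U * V) by (apply Rmult_le_pos; nra).
    replace ((1 + e / 3) * U * ((1 + e / 3) * V)) with ((1 + e / 3) * (1 + e / 3) * (U * V))
      by ring.
    apply Rmult_le_compat_r; nra.
Qed.

Lemma mul_almost_ge e u U v V : 0 < e <= 1/2 -> 0 <= U -> 0 <= V ->
  (1 - e / 3) * U <= u -> (1 - e / 3) * V <= v -> (1 - e) * (U * V) <= u * v.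
Proof.
  intros He HU HV Hu Hv. apply Rle_trans with (((1 - e / 3) * U) * ((1 - e / 3) * V)).
  - replace ((1 - e / 3) * U * ((1 - e / 3) * V)) with ((1 - e / 3) * (1 - e / 3) * (U * V))
      by ring.
    apply Rmult_le_compat_r; [apply Rmult_le_pos|]; nra.
  - apply Rmult_le_compat; nra.
Qed.

Lemma inv_le_of_almost_ge L Lam e : 0 < L -> 0 < e <= 1/2 ->
  L * (1 - e / 2) <= Lam -> / Lam <= (1 + e) * / L.
Proof.
  intros HL He H. assert (0 < Lam) by nra.
  assert ((1 + e) * (L * (1 - e / 2)) <= (1 + e) * Lam) by (apply Rmult_le_compat_l; lra).
  assert (0 <= L * (e / 2 - e * e / 2)) by (apply Rmult_le_pos; nra).
  assert (L <= (1 + e) * Lam) by nra.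
  apply (Rmult_le_reg_r (L * Lam)); [nra|]. field_simplify; lra.
Qed.

Lemma inv_ge_of_almost_le L Lam e : 0 < L -> 0 < e <= 1/2 -> 0 < Lam ->
  Lam <= (1 + e) * L -> (1 - e) * / L <= / Lam.
Proof.
  intros HL He H0 H.
  assert ((1 - e) * Lam <= (1 - e) * ((1 + e) * L)) by (apply Rmult_le_compat_l; lra).
  assert (0 <= L * (e * e)) by (apply Rmult_le_pos; nra).
  assert ((1 - e) * Lam <= L) by nra.
  apply (Rmult_le_reg_r (L * Lam)); [nra|]. field_simplify; lra.
Qed.

Lemma ratio_near_1 M Hm c e N I : 0 < M -> 0 <= Hm -> 0 < c -> 0 < e <= 1/4 ->
  2 * (1 - e) * c * (M - e - 2 * e * Hm) <= N -> N <= 2 * (1 + e) * c * M + e * c ->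
  (1 - e) * (1 - 2 * e) * c <= I -> I <= (1 + e) * c ->
  Rabs (N / (2 * M * I) - 1) <= e * (2 * (8 * M + 2 + 4 * Hm) / M).
Proof.
  intros HM HHm Hc He HN1 HN2 HI1 HI2.
  set (Dn := 2 * M * I). set (K := c * e * (8 * M + 2 + 4 * Hm)).
  assert (HI : c / 4 <= I) by (assert ((1 - e) * (1 - 2 * e) >= 1/4) by nra; nra).
  assert (HDn : M * c / 2 <= Dn) by (unfold Dn; nra).
  assert (HK : 0 <= K) by (unfold K; apply Rmult_le_pos; nra).
  assert (U1 : N - Dn <= K).
  { unfold Dn, K. assert (2 * M * ((1 - e) * (1 - 2 * e) * c) <= 2 * M * I)
      by (apply Rmult_le_compat_l; lra).
    assert (0 <= c * e * (4 * M * e + 1 + 4 * Hm)) by (apply Rmult_le_pos; nra).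
    nra. }
  assert (U2 : Dn - N <= K).
  { unfold Dn, K. assert (2 * M * I <= 2 * M * ((1 + e) * c)) by (apply Rmult_le_compat_l; lra).
    assert (0 <= c * e * (4 * M + 2 * e * (1 + 2 * Hm))) by (apply Rmult_le_pos; nra).
    nra. }
  assert (HMc : 0 < M * c) by nra.
  replace (N / Dn - 1) with ((N - Dn) / Dn) by (field; lra).
  rewrite Rabs_div, (Rabs_right Dn) by lra.
  apply Rle_trans with (K / Dn).
  - apply Rmult_le_compat_r; [apply Rlt_le, Rinv_0_lt_compat; lra|apply Rabs_le; lra].
  - apply (Rmult_le_reg_r Dn); [lra|].
    replace (K / Dn * Dn) with K by (field; lra).
    replace (e * (2 * (8 * M + 2 + 4 * Hm) / M) * Dn) with (K * (2 * Dn / (M * c)))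
      by (unfold K; field; lra).
    assert (1 <= 2 * Dn / (M * c)).
    { apply (Rmult_le_reg_r (M * c)); [lra|]. field_simplify; lra. }
    nra.
Qed.

Lemma eventually_ge K : at_top (fun x => K <= x).
Proof. exists K. intros; lra. Qed.

Lemma eventually_ln_ge K : at_top (fun x => K <= ln x).
Proof.
  exists (exp K). intros x Hx. rewrite <- (ln_exp K) at 1.
  apply ln_le; [apply exp_pos|lra].
Qed.

Lemma eventually_Rpower_le beta eta : 0 < beta -> 0 < eta ->
  at_top (fun x => Rpower x (- beta) <= eta).
Proof.
  intros Hb He. apply (filter_imp (fun x => - ln eta / beta <= ln x)); [|apply eventually_ln_ge].
  intros x Hx. unfold Rpower. rewrite <- (exp_ln eta) by lra. apply exp_le_exp.
  apply (Rmult_le_compat_l beta) in Hx; [|lra].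
  replace (beta * (- ln eta / beta)) with (- ln eta) in Hx by (field; lra). lra.
Qed.

Lemma eventually_mul_ln_ge e K : 0 < e -> at_top (fun x => K <= e * ln x).
Proof.
  intros He. apply (filter_imp (fun x => K / e <= ln x)); [|apply eventually_ln_ge].
  intros x Hx. apply (Rmult_le_compat_l e) in Hx; [|lra].
  replace (e * (K / e)) with K in Hx by (field; lra). exact Hx.
Qed.

Lemma eventually_Rpower_ge a K : 0 < a -> at_top (fun x => K <= Rpower x a).
Proof.
  intros Ha. apply (filter_imp (fun x => ln (Rmax K 1) <= a * ln x));
    [|apply eventually_mul_ln_ge, Ha].
  intros x Hx. apply Rle_trans with (Rmax K 1); [apply Rmax_l|].
  rewrite <- (exp_ln (Rmax K 1)) by (pose proof (Rmax_r K 1); lra). apply exp_le_exp, Hx.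
Qed.

Lemma eventually_Rpower_le_mul a k : a < 1 -> 0 < k ->
  at_top (fun x => Rpower x a <= k * x).
Proof.
  intros Ha Hk.
  apply (filter_imp (fun x => 0 < x /\ Rpower x (- (1 - a)) <= k)).
  - intros x [Hx H]. apply Rpower_mul_le in H; [|exact Hx].
    replace (1 - (1 - a)) with a in H by ring. exact H.
  - apply filter_and; [exists 0; intros; lra|apply eventually_Rpower_le; lra].
Qed.

Lemma eventually_ln_mul_Rpower_le beta eta : 0 < beta -> 0 < eta ->
  at_top (fun x => ln x * Rpower x (- beta) <= eta).
Proof.
  intros Hb He.
  apply (filter_imp (fun x => 1 <= x /\ Rpower x (- (beta / 2)) <= eta * beta / 2)).
  2:{ apply filter_and; [apply eventually_ge|apply eventually_Rpower_le; nra]. }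
  intros x [H1 H2]. pose proof (ln_le_Rpower x beta ltac:(lra) Hb).
  apply Rle_trans with ((2 / beta) * Rpower x (beta / 2) * Rpower x (- beta)).
  { apply Rmult_le_compat_r; [apply Rlt_le, exp_pos|exact H]. }
  rewrite Rmult_assoc, <- Rpower_plus.
  replace (beta / 2 + - beta) with (- (beta / 2)) by field.
  apply (Rmult_le_reg_l (beta / 2)); [lra|]. field_simplify; lra.
Qed.

Lemma exists_Z_mod T t : 0 < T -> exists n : Z, 0 <= t - IZR n * T < T.
Proof.
  intros HT. destruct (archimed (t / T)) as [A1 A2].
  exists (up (t / T) - 1)%Z. rewrite minus_IZR.
  assert (E : t = t / T * T) by (field; lra).
  split.
  - apply (Rmult_le_compat_r T) in A2; lra.
  - apply (Rmult_lt_compat_r T) in A1; lra.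
Qed.

(* The exceptional point [q] is where the window may meet a zero [x0 b^n] of [h o ln]. *)
Definition nearly_const_on (F : R -> R) (e c q a a' : R) : Prop :=
  forall y, a <= y <= a' -> F y <= (1 + e) * c /\ (e <= Rabs (y - q) -> (1 - e) * c <= F y).

Lemma phi_fun_ge_1 alpha h y : 1 <= y -> phi_fun alpha h y = Rpower y (- alpha - 1) * h (ln y).
Proof. intros Hy. unfold phi_fun. destruct (Rle_dec 1 y); [reflexivity|lra]. Qed.

Section LogPeriodic.

Variables (b x0 delta alpha : R) (h : R -> R).
Hypothesis Hx0 : 1 < x0.
Hypothesis Hx0b : x0 < b.
Hypothesis Hd0 : 0 < delta.
Hypothesis Hd1 : delta < x0 - 1.
Hypothesis Hd2 : delta < b - x0.
Hypothesis Hcont : continuity h.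
Hypothesis Hper : forall t, h (t + ln b) = h t.
Hypothesis Hpos : forall x, 1 <= x <= b -> x <> x0 -> 0 < h (ln x).
Hypothesis Hzero : h (ln x0) = 0.
Hypothesis Hnear : forall x, 0 < Rabs (x - x0) < delta -> h (ln x) = - / ln (Rabs (x - x0)).
Hypothesis Halpha : 0 < alpha.

Lemma ln_b_pos : 0 < ln b.
Proof. rewrite <- ln_1. apply ln_increasing; lra. Qed.

Lemma h_periodic_Z (n : Z) t : h (t + IZR n * ln b) = h t.
Proof.
  assert (Hnat : forall (k : nat) t, h (t + INR k * ln b) = h t).
  { induction k as [|k IH]; intros s; [simpl; f_equal; ring|].
    rewrite S_INR. replace (s + (INR k + 1) * ln b) with (s + INR k * ln b + ln b) by ring.
    rewrite Hper. apply IH. }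
  destruct (Z.lt_ge_cases n 0) as [Hn|Hn].
  - rewrite <- (Hnat (Z.to_nat (- n)) (t + IZR n * ln b)).
    rewrite INR_IZR_INZ, Z2Nat.id, opp_IZR by lia. f_equal. ring.
  - rewrite <- (Z2Nat.id n), <- INR_IZR_INZ by lia. apply Hnat.
Qed.

Lemma h_nonneg t : 0 <= h t.
Proof.
  destruct (exists_Z_mod (ln b) t ln_b_pos) as [n Hn].
  rewrite <- (h_periodic_Z (- n) t), opp_IZR.
  replace (t + - IZR n * ln b) with (ln (exp (t - IZR n * ln b))) by (rewrite ln_exp; ring).
  set (y := exp (t - IZR n * ln b)).
  destruct (Req_dec y x0) as [->|E]; [lra|].
  apply Rlt_le, Hpos; [|exact E]. unfold y. split.
  - rewrite <- exp_0. apply exp_le_exp. lra.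
  - apply Rle_trans with (exp (ln b)); [apply exp_le_exp; lra|rewrite exp_ln; lra].
Qed.

Lemma h_bounded : exists Hm, 0 < Hm /\ forall t, h t <= Hm.
Proof.
  destruct (continuity_ab_maj h 0 (ln b) (Rlt_le _ _ ln_b_pos)) as [m [Hm _]].
  { intros c _. apply Hcont. }
  exists (Rabs (h m) + 1). split; [pose proof (Rabs_pos (h m)); lra|].
  intros t. destruct (exists_Z_mod (ln b) t ln_b_pos) as [n Hn].
  rewrite <- (h_periodic_Z (- n) t), opp_IZR.
  pose proof (Hm (t + - IZR n * ln b) ltac:(lra)). pose proof (Rle_abs (h m)). lra.
Qed.

(* The self-similarity of [h o ln]: every [x > 0] is [D z] with [z] in [[1, b)]
   and [D] a power of [b], and [h o ln] is invariant under division by [D]. *)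
Lemma h_ln_rescale x : 0 < x -> exists D, 0 < D /\ x / b < D <= x /\
  forall y, 0 < y -> h (ln y) = h (ln (y / D)).
Proof.
  intros Hx. destruct (exists_Z_mod (ln b) (ln x) ln_b_pos) as [n Hn].
  exists (exp (IZR n * ln b)). split; [apply exp_pos|]. split; [split|].
  - assert (A : exp (ln x) < exp (IZR n * ln b + ln b)) by (apply exp_increasing; lra).
    rewrite exp_plus, !exp_ln in A by lra.
    apply (Rmult_lt_reg_r b); [lra|]. unfold Rdiv. rewrite Rmult_assoc, Rinv_l; lra.
  - apply Rle_trans with (exp (ln x)); [apply exp_le_exp; lra|rewrite exp_ln; lra].
  - intros y Hy. unfold Rdiv.
    rewrite ln_mult, ln_Rinv, ln_exp by (try apply Rinv_0_lt_compat; try apply exp_pos; lra).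
    rewrite <- (h_periodic_Z n (ln y + - (IZR n * ln b))). f_equal. ring.
Qed.

Lemma h_ln_near_scaled D y : 0 < D -> 0 < Rabs (y - x0 * D) < delta * D ->
  h (ln (y / D)) = / (ln D - ln (Rabs (y - x0 * D))).
Proof.
  intros HD Hy.
  assert (E : Rabs (y / D - x0) = Rabs (y - x0 * D) / D).
  { replace (y / D - x0) with ((y - x0 * D) / D) by (field; lra).
    rewrite Rabs_div, (Rabs_right D); lra. }
  rewrite Hnear, E.
  - unfold Rdiv. rewrite ln_mult, ln_Rinv by (try apply Rinv_0_lt_compat; lra).
    rewrite <- Rinv_opp. f_equal. ring.
  - rewrite E. split; [apply Rdiv_lt_0_compat; lra|].
    apply (Rmult_lt_reg_r D); [lra|]. unfold Rdiv. rewrite Rmult_assoc, Rinv_l; lra.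
Qed.

(* A margin so that [[1 - rho0, b + rho0]] still avoids the zeros [x0 / b] and
   [x0 b] of [h o ln]. *)
Let rho0 := Rmin ((b - x0) / (2 * b)) ((x0 - 1) / 2).

Lemma rho0_bounds : 0 < rho0 < 1/2 /\ rho0 <= (x0 - 1) / 2 /\ b * rho0 <= (b - x0) / 2.
Proof.
  assert (R1 : rho0 <= (b - x0) / (2 * b)) by apply Rmin_l.
  assert (R2 : rho0 <= (x0 - 1) / 2) by apply Rmin_r.
  assert (R3 : b * ((b - x0) / (2 * b)) = (b - x0) / 2) by (field; lra).
  assert (0 < rho0) by (apply Rmin_glb_lt; [apply Rdiv_lt_0_compat|]; lra).
  assert ((b - x0) / (2 * b) < 1/2)
    by (apply (Rmult_lt_reg_r (2 * b)); [lra|]; field_simplify; lra).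
  repeat split; try lra. rewrite <- R3. apply Rmult_le_compat_l; lra.
Qed.

Lemma h_ln_pos z : 1 - rho0 <= z <= b + rho0 -> z <> x0 -> 0 < h (ln z).
Proof.
  intros Hz Hne. destruct rho0_bounds as [[R0 R1] [R2 R3]].
  destruct (Rlt_le_dec z 1) as [Hz1|Hz1]; [|destruct (Rle_lt_dec z b) as [Hzb|Hzb]].
  - rewrite <- Hper, <- ln_mult by lra. apply Hpos.
    + assert (b * (1 - rho0) <= b * z) by (apply Rmult_le_compat_l; lra). nra.
    + assert (b * (1 - rho0) <= b * z) by (apply Rmult_le_compat_l; lra). nra.
  - apply Hpos; [lra|exact Hne].
  - replace (ln z) with (ln (z / b) + ln b)
      by (unfold Rdiv; rewrite ln_mult, ln_Rinv by (try apply Rinv_0_lt_compat; lra); ring).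
    rewrite Hper. apply Hpos.
    + split; apply (Rmult_le_reg_r b); try lra; field_simplify; nra.
    + intros E. assert (z = x0 * b) by (rewrite <- E; field; lra). nra.
Qed.

Lemma h_ln_continuous z : 0 < z -> continuity_pt (fun z => h (ln z)) z.
Proof.
  intros Hz. apply (continuity_pt_comp ln h z); [|apply Hcont].
  apply derivable_continuous_pt. exists (/ z). apply derivable_pt_lim_ln, Hz.
Qed.

Lemma h_ln_unif_continuous eps : 0 < eps -> exists s, 0 < s /\
  forall z z', 1 - rho0 <= z <= b + rho0 -> 1 - rho0 <= z' <= b + rho0 ->
  Rabs (z - z') < s -> Rabs (h (ln z) - h (ln z')) < eps.
Proof.
  intros He. destruct rho0_bounds as [[R0 R1] _].
  destruct (Heine (fun z => h (ln z)) (fun c => 1 - rho0 <= c <= b + rho0)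
     (compact_P3 _ _)) with (eps := mkposreal eps He) as [s Hs].
  { intros z Hz. apply h_ln_continuous. cbv beta in Hz. lra. }
  exists s. split; [apply cond_pos|]. exact Hs.
Qed.

Lemma h_ln_ge_away r : 0 < r -> r <= (x0 - 1) / 2 -> r <= (b - x0) / 2 ->
  exists m, 0 < m /\ forall z, 1 - rho0 <= z <= b + rho0 -> r <= Rabs (z - x0) -> m <= h (ln z).
Proof.
  intros Hr Hr1 Hr2. destruct rho0_bounds as [[R0 R1] [R2 R3]].
  destruct (continuity_ab_min (fun z => h (ln z)) (1 - rho0) (x0 - r) ltac:(lra))
    as [m1 [Hm1 Hm1']]; [intros c Hc; apply h_ln_continuous; lra|].
  destruct (continuity_ab_min (fun z => h (ln z)) (x0 + r) (b + rho0) ltac:(lra))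
    as [m2 [Hm2 Hm2']]; [intros c Hc; apply h_ln_continuous; lra|].
  exists (Rmin (h (ln m1)) (h (ln m2))). split.
  - apply Rmin_glb_lt; apply h_ln_pos; lra.
  - intros z Hz Hzr. destruct (Rle_lt_dec z x0) as [Hzx|Hzx].
    + rewrite Rabs_left1 in Hzr by lra. eapply Rle_trans; [apply Rmin_l|]. apply Hm1; lra.
    + rewrite Rabs_right in Hzr by lra. eapply Rle_trans; [apply Rmin_r|]. apply Hm2; lra.
Qed.

Section Window.

Variables e x D P : R.
Hypothesis He : 0 < e <= 1/2.
Hypothesis Hx : 2 <= x.
Hypothesis HD : 0 < D.
Hypothesis HDx : x / b < D <= x.
Hypothesis Hsh : forall y, 0 < y -> h (ln y) = h (ln (y / D)).
Hypothesis HP : 1 <= P.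
Hypothesis HPx : 2 * P <= x.

Variables m s r w : R.
Hypothesis Hm : 0 < m.
Hypothesis Hmin : forall z, 1 - rho0 <= z <= b + rho0 -> r <= Rabs (z - x0) -> m <= h (ln z).
Hypothesis Hunif : forall z z', 1 - rho0 <= z <= b + rho0 -> 1 - rho0 <= z' <= b + rho0 ->
  Rabs (z - z') < s -> Rabs (h (ln z) - h (ln z')) < e * m.
Hypothesis Hr : r <= delta / 2 /\ r <= 1/3.
Hypothesis Hw : w <= rho0 /\ w < s.
Hypothesis HbP : b * P <= w * x.
Hypothesis Hlnm : / m <= ln x.
Hypothesis HPe : 8 / e <= P.
Hypothesis HPP : b * (P * P) <= delta / 4 * x.
Hypothesis HlnP : 8 * ln P <= e * ln x.
Hypothesis Hlnb : 4 * ln (2 * b) <= e * ln x.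
Hypothesis Hlne : - ln e <= e * ln x.

Lemma window_near y : x - P <= y <= x + 1 -> 0 < y /\ Rabs (y - x) <= P.
Proof. intros Hy. split; [lra|apply Rabs_le; lra]. Qed.

Lemma x_lt_b_D : x < b * D.
Proof.
  destruct HDx as [H1 _]. apply (Rmult_lt_compat_l b) in H1; [|lra].
  unfold Rdiv in H1. rewrite Rmult_comm, Rmult_assoc, Rinv_l, Rmult_1_r in H1; lra.
Qed.

(* Away from [x0 D], the window is tiny on the scale [D], where [h o ln] is
   uniformly continuous and bounded below. *)
Lemma nearly_const_far : r <= Rabs (x / D - x0) ->
  exists c q, / ln x <= c /\ nearly_const_on (fun y => h (ln y)) e c q (x - P) (x + 1).
Proof.
  intros Far. destruct Hw as [Hw1 Hw2].
  destruct rho0_bounds as [[R0 R1] _]. pose proof x_lt_b_D.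
  set (z := x / D).
  assert (Hz : 1 <= z <= b) by (unfold z; split; apply (Rmult_le_reg_r D); try lra;
    field_simplify; lra).
  assert (HPD : P <= w * D) by nra.
  assert (Hhx : h (ln x) = h (ln z)) by (apply Hsh; lra).
  assert (Gz : m <= h (ln z)) by (apply Hmin; [split; lra|exact Far]).
  exists (h (ln x)), (x + 3). split.
  { rewrite Hhx. apply Rle_trans with m; [|exact Gz].
    rewrite <- (Rinv_inv m). apply Rinv_le_contravar; [apply Rinv_0_lt_compat|]; lra. }
  intros y Hy. destruct (window_near y Hy) as [Hy0 Hyx].
  assert (Hzy : Rabs (z - y / D) <= w).
  { replace (z - y / D) with ((x - y) / D) by (unfold z; field; lra).
    rewrite Rabs_div, (Rabs_right D), Rabs_minus_sym by lra.
    apply (Rmult_le_reg_r D); [lra|]. field_simplify; lra. }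
  apply Rabs_le_between in Hzy.
  assert (U : Rabs (h (ln z) - h (ln (y / D))) < e * m)
    by (apply Hunif; [lra|lra|apply Rabs_def1; lra]).
  apply Rabs_def2 in U. rewrite (Hsh y Hy0), Hhx.
  assert (e * m <= e * h (ln z)) by (apply Rmult_le_compat_l; lra).
  split; [lra|intros _; lra].
Qed.

(* Near [x0 D] but not too near, [h o ln = 1 / (ln D - ln |y - x0 D|)] and the
   logarithm barely moves across the window. *)
Lemma nearly_const_near_far : Rabs (x / D - x0) < r -> P * P <= Rabs (x - x0 * D) ->
  exists c q, / ln x <= c /\ nearly_const_on (fun y => h (ln y)) e c q (x - P) (x + 1).
Proof.
  intros Near NF. destruct Hr as [Hr1 Hr2].
  set (p := x0 * D) in *. set (d := Rabs (x - p)) in *.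
  assert (Edz : d = D * Rabs (x / D - x0)).
  { unfold d, p. replace (x - x0 * D) with (D * (x / D - x0)) by (field; lra).
    rewrite Rabs_mult, (Rabs_right D); lra. }
  assert (Hdge1 : 1 <= d) by nra.
  assert (HdD : d < r * D) by (rewrite Edz; nra).
  assert (H16 : 16 <= P).
  { apply Rle_trans with (8 / e); [|exact HPe].
    apply (Rmult_le_reg_r e); [lra|]. field_simplify; lra. }
  assert (HPd : 16 * P <= d) by nra.
  set (L0 := ln D - ln d).
  assert (HL0 : 1 <= L0).
  { replace L0 with (ln (/ Rabs (x / D - x0)))
      by (unfold L0; rewrite Edz, ln_Rinv, ln_mult by nra; ring).
    apply one_le_ln_inv. nra. }
  exists (/ L0), (x + 3). split.
  { apply Rinv_le_contravar; [lra|]. unfold L0.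
    assert (ln D <= ln x) by (apply ln_le; lra).
    assert (0 <= ln d) by (rewrite <- ln_1; apply ln_le; lra). lra. }
  intros y Hy. destruct (window_near y Hy) as [Hy0 Hyx].
  set (u := Rabs (y - p) / d).
  assert (Hlu : Rabs (ln u) <= e / 4).
  { apply Rle_trans with (2 * (P / d)); [unfold u, d in *; apply Rabs_ln_dist_ratio_le; lra|].
    assert (8 <= e * P)
      by (replace 8 with (e * (8 / e)) by (field; lra); apply Rmult_le_compat_l; lra).
    assert (8 * P <= e * d) by nra.
    apply (Rmult_le_reg_r d); [lra|]. field_simplify; lra. }
  apply Rabs_le_between in Hlu.
  assert (Hgy : h (ln y) = / (L0 - ln u)).
  { assert (Eyp : Rabs (y - p) = d * u) by (unfold u; field; lra).
    pose proof (Rabs_dist_shift x y p P Hyx). fold d in H.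
    assert (0 < u) by (unfold u; apply Rdiv_lt_0_compat; lra).
    rewrite (Hsh y Hy0), h_ln_near_scaled; fold p.
    - unfold L0. rewrite Eyp, ln_mult by lra. f_equal; ring.
    - lra.
    - assert (r * D <= delta / 2 * D) by (apply Rmult_le_compat_r; lra). lra. }
  rewrite Hgy. split.
  - apply inv_le_of_almost_ge; [lra|lra|nra].
  - intros _. apply inv_ge_of_almost_le; [lra|lra|lra|nra].
Qed.

(* Very near [x0 D] the denominator [ln D - ln |y - x0 D|] is [ln x (1 + O(e))],
   except where [|y - x0 D| < e]. *)
Lemma nearly_const_near_near : Rabs (x - x0 * D) < P * P ->
  exists c q, / ln x <= c /\ nearly_const_on (fun y => h (ln y)) e c q (x - P) (x + 1).
Proof.
  intros NN. pose proof x_lt_b_D.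
  set (p := x0 * D) in *.
  assert (HL : 0 < ln x) by (rewrite <- ln_1; apply ln_increasing; lra).
  exists (/ ln x), p. split; [lra|].
  intros y Hy. destruct (window_near y Hy) as [Hy0 Hyx].
  assert (Hyp2 : Rabs (y - p) <= 2 * (P * P)).
  { pose proof (Rabs_dist_shift x y p P Hyx). assert (P <= P * P) by nra. lra. }
  assert (HyD : Rabs (y - p) < delta * D).
  { assert (delta / 4 * x < delta / 4 * (b * D)) by (apply Rmult_lt_compat_l; lra).
    assert (P * P < delta / 4 * D).
    { apply (Rmult_lt_reg_l b); [lra|].
      replace (b * (delta / 4 * D)) with (delta / 4 * (b * D)) by ring. lra. }
    assert (0 < delta * D) by nra. lra. }
  assert (Hup : 0 < Rabs (y - p) -> ln x * (1 - e / 2) <= ln D - ln (Rabs (y - p))).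
  { intros Hp1.
    assert (ln (Rabs (y - p)) <= ln 2 + 2 * ln P).
    { replace (2 * ln P) with (ln P + ln P) by ring.
      rewrite <- !ln_mult by nra. apply ln_le; nra. }
    assert (ln x - ln b <= ln D).
    { rewrite <- ln_div by lra. apply ln_le; [apply Rdiv_lt_0_compat|]; lra. }
    assert (ln (2 * b) = ln 2 + ln b) by (apply ln_mult; lra).
    nra. }
  destruct (Req_dec (Rabs (y - p)) 0) as [E0|E0].
  - apply Rabs_eq_0 in E0.
    rewrite (Hsh y Hy0).
    replace (y / D) with x0 by (replace y with (x0 * D) by (unfold p in E0; lra); field; lra).
    rewrite Hzero. split; [apply Rmult_le_pos; [|apply Rlt_le, Rinv_0_lt_compat]; lra|].
    intros Hq. rewrite E0, Rabs_R0 in Hq. lra.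
  - assert (Hp1 : 0 < Rabs (y - p)) by (pose proof (Rabs_pos (y - p)); lra).
    rewrite (Hsh y Hy0), h_ln_near_scaled by (fold p; lra). fold p. split.
    + apply inv_le_of_almost_ge; [lra|lra|apply Hup, Hp1].
    + intros Hq. apply inv_ge_of_almost_le; [lra|lra| |].
      * pose proof (Hup Hp1).
        assert (0 < ln x * (1 - e / 2)) by (apply Rmult_lt_0_compat; lra). lra.
      * assert (ln e <= ln (Rabs (y - p))) by (apply ln_le; lra).
        assert (ln D <= ln x) by (apply ln_le; lra). lra.
Qed.

Lemma nearly_const_window :
  exists c q, / ln x <= c /\ nearly_const_on (fun y => h (ln y)) e c q (x - P) (x + 1).
Proof.
  destruct (Rle_lt_dec r (Rabs (x / D - x0))) as [Far|Near].
  - exact (nearly_const_far Far).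
  - destruct (Rle_lt_dec (P * P) (Rabs (x - x0 * D))) as [NF|NN].
    + exact (nearly_const_near_far Near NF).
    + exact (nearly_const_near_near NN).
Qed.

End Window.

Lemma h_ln_nearly_const e : 0 < e <= 1/2 -> exists th, 0 < th < 1/8 /\
  at_top (fun x => exists c q, / ln x <= c /\
    nearly_const_on (fun y => h (ln y)) e c q (x - Rpower x th) (x + 1)).
Proof.
  intros He. destruct rho0_bounds as [[R0 R1] [R2 R3]].
  set (r := Rmin (delta / 2) (1/3)).
  assert (Hr : 0 < r /\ r <= delta / 2 /\ r <= 1/3)
    by (unfold r; split; [apply Rmin_glb_lt|split; [apply Rmin_l|apply Rmin_r]]; lra).
  destruct (h_ln_ge_away r) as [m [Hm Hmin]]; [lra|lra|lra|].
  destruct (h_ln_unif_continuous (e * m)) as [s [Hs Hunif]]; [nra|].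
  set (th := e / 8).
  set (w := Rmin rho0 (Rmin (r / 2) (s / 2))).
  assert (Hw : 0 < w /\ w <= rho0 /\ w < s).
  { unfold w. split; [apply Rmin_glb_lt; [|apply Rmin_glb_lt]; lra|].
    split; [apply Rmin_l|]. eapply Rle_lt_trans; [apply Rmin_r|].
    eapply Rle_lt_trans; [apply Rmin_r|lra]. }
  exists th. split; [unfold th; lra|].
  assert (Hth : 0 < th < 1/8) by (unfold th; lra).
  assert (Hev := filter_and (F := at_top) _ _ (eventually_ge 2)
    (filter_and (F := at_top) _ _ (eventually_Rpower_ge th (8 / e) ltac:(lra))
    (filter_and (F := at_top) _ _
      (eventually_Rpower_le_mul th (w / b) ltac:(lra) ltac:(apply Rdiv_lt_0_compat; lra))
    (filter_and (F := at_top) _ _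
      (eventually_Rpower_le_mul (2 * th) (delta / (4 * b)) ltac:(lra)
        ltac:(apply Rdiv_lt_0_compat; lra))
    (filter_and (F := at_top) _ _ (eventually_mul_ln_ge e (4 * ln (2 * b)) ltac:(lra))
    (filter_and (F := at_top) _ _ (eventually_mul_ln_ge e (- ln e) ltac:(lra))
      (eventually_ln_ge (/ m)))))))).
  revert Hev. apply filter_imp. intros x [Hx [HPe [C1 [C2 [Hlnb [Hlne Hlnm]]]]]].
  set (P := Rpower x th) in *.
  assert (HP : 1 <= P).
  { apply Rle_trans with (8 / e); [|exact HPe].
    apply (Rmult_le_reg_r e); [lra|]. field_simplify; lra. }
  assert (HbP : b * P <= w * x).
  { apply (Rmult_le_compat_l b) in C1; [|lra].
    replace (b * (w / b * x)) with (w * x) in C1 by (field; lra). exact C1. }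
  assert (HPP : b * (P * P) <= delta / 4 * x).
  { replace (2 * th) with (th + th) in C2 by ring. rewrite Rpower_plus in C2. fold P in C2.
    apply (Rmult_le_compat_l b) in C2; [|lra].
    replace (b * (delta / (4 * b) * x)) with (delta / 4 * x) in C2 by (field; lra). exact C2. }
  assert (HlnP : 8 * ln P <= e * ln x) by (unfold P, th; rewrite ln_Rpower; lra).
  assert (HPx : 2 * P <= x) by nra.
  destruct (h_ln_rescale x) as [D [HD [HDx Hsh]]]; [lra|].
  apply (nearly_const_window e x D P) with (m := m) (s := s) (r := r) (w := w); auto; lra.
Qed.

Lemma phi_nearly_const e : 0 < e <= 1/2 -> exists th, 0 < th < 1/8 /\
  at_top (fun x => 2 <= x /\ exists c q, Rpower x (- alpha - 1) * / ln x <= c /\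
    nearly_const_on (phi_fun alpha h) e c q (x - Rpower x th) (x + 1)).
Proof.
  intros He. destruct (h_ln_nearly_const (e / 3)) as [th [Hth Hev]]; [lra|].
  exists th. split; [exact Hth|].
  set (a := - alpha - 1).
  assert (Ha : Rabs a = alpha + 1) by (unfold a; rewrite Rabs_left by lra; ring).
  set (eta := e / (12 * (alpha + 1))).
  assert (Heta : 0 < eta <= 1/24 /\ 4 * Rabs a * eta = e / 3 /\ 2 * Rabs a * eta = e / 6).
  { rewrite Ha. unfold eta. repeat split; try (field; lra).
    - apply Rdiv_lt_0_compat; lra.
    - apply (Rmult_le_reg_r (12 * (alpha + 1))); [lra|]. field_simplify; lra. }
  destruct Heta as [Heta [Ea4 Ea2]].
  assert (Hev2 := filter_and (F := at_top) _ _ Hev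
    (filter_and (F := at_top) _ _ (eventually_ge (Rmax 2 (/ eta)))
      (eventually_Rpower_le_mul th eta ltac:(lra) ltac:(lra)))).
  revert Hev2. apply filter_imp. intros x [[c [q [Hc Hnc]]] [Hx1 HPx]].
  assert (Hx : 2 <= x) by (eapply Rle_trans; [apply Rmax_l|exact Hx1]).
  assert (Hxe : 1 <= eta * x).
  { apply (Rmult_le_reg_l (/ eta)); [apply Rinv_0_lt_compat; lra|].
    rewrite <- Rmult_assoc, Rinv_l, Rmult_1_l, Rmult_1_r by lra.
    eapply Rle_trans; [apply Rmax_r|exact Hx1]. }
  split; [exact Hx|].
  assert (HL : 0 < ln x) by (rewrite <- ln_1; apply ln_increasing; lra).
  assert (Hc0 : 0 < c) by (apply Rlt_le_trans with (/ ln x); [apply Rinv_0_lt_compat|]; lra).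
  exists (Rpower x a * c), q. split.
  { apply Rmult_le_compat_l; [apply Rlt_le, exp_pos|exact Hc]. }
  intros y Hy. destruct (Hnc y Hy) as [Hup Hlo].
  assert (Hy1 : 1 <= y) by nra.
  assert (Hr : 1 - eta <= y / x <= 1 + eta)
    by (split; apply (Rmult_le_reg_r x); try lra; field_simplify; lra).
  destruct (Rpower_ratio a x y eta ltac:(lra) ltac:(lra) ltac:(lra) Hr ltac:(lra)) as [P1 P2].
  rewrite Ea2 in P1. rewrite Ea4 in P2.
  pose proof (exp_pos (a * ln x)) as Hxa. fold (Rpower x a) in Hxa.
  pose proof (h_nonneg (ln y)). pose proof (exp_pos (a * ln y)) as Hya. fold (Rpower y a) in Hya.
  rewrite phi_fun_ge_1 by exact Hy1. fold a. split.
  - apply mul_almost_le; lra.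
  - intros Hq. apply mul_almost_ge; [lra|lra|lra| |apply Hlo; lra].
    apply Rle_trans with ((1 - e / 6) * Rpower x a); [apply Rmult_le_compat_r|]; lra.
Qed.

Let density y := Rpower y (- 1 - alpha) * h (ln y).

Lemma phi_fun_density y : 1 <= y -> phi_fun alpha h y = density y.
Proof. intros Hy. rewrite phi_fun_ge_1 by exact Hy. unfold density. do 2 f_equal. ring. Qed.

Lemma density_nonneg y : 0 <= density y.
Proof. apply Rmult_le_pos; [apply Rlt_le, exp_pos|apply h_nonneg]. Qed.

Lemma phi_nonneg y : 0 <= phi_fun alpha h y.
Proof.
  unfold phi_fun. destruct (Rle_dec 1 y); [|lra].
  apply Rmult_le_pos; [apply Rlt_le, exp_pos|apply h_nonneg].
Qed.

Lemma continuous_density y : 0 < y -> continuous density y.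
Proof.
  intros Hy. apply (continuous_mult (fun y => Rpower y (- 1 - alpha)) (fun y => h (ln y))).
  - apply continuous_Rpower, Hy.
  - apply continuity_pt_filterlim, h_ln_continuous, Hy.
Qed.

Lemma ex_RInt_density a c : 0 < a -> a <= c -> ex_RInt density a c.
Proof.
  intros Ha Hac. apply (ex_RInt_open_ext density density); auto.
  intros z Hz. apply continuous_density. lra.
Qed.

Lemma ex_RInt_phi a c : a <= c -> ex_RInt (phi_fun alpha h) a c.
Proof.
  intros Hac. apply (ex_RInt_subinterval _ a c (Rmin a 1) (Rmax c 1));
    [apply Rmin_l|exact Hac|apply Rmax_l|].
  apply (ex_RInt_Chasles (V := R_NormedModule) _ _ 1).
  - apply ex_RInt_zero_open; [apply Rmin_r|]. intros z Hz.
    unfold phi_fun. destruct (Rle_dec 1 z); [lra|reflexivity].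
  - apply (ex_RInt_open_ext _ density); [apply Rmax_r| |].
    + intros z Hz. apply continuous_density. lra.
    + intros z Hz. apply phi_fun_density. lra.
Qed.

Let conv_integrand x u := phi_fun alpha h (x - u) * phi_fun alpha h u.

Lemma conv_integrand_zero x u : u < 1 \/ Rmax 1 (x - 1) < u -> conv_integrand x u = 0.
Proof.
  intros Hu. pose proof (Rmax_r 1 (x - 1)). unfold conv_integrand, phi_fun.
  destruct (Rle_dec 1 u), (Rle_dec 1 (x - u)); try ring. lra.
Qed.

Lemma ex_RInt_conv_integrand x a c : a <= c -> ex_RInt (conv_integrand x) a c.
Proof.
  intros Hac. set (m := Rmax 1 (x - 1)).
  assert (Hm : 1 <= m) by apply Rmax_l.
  apply (ex_RInt_subinterval _ a c (Rmin a 1) (Rmax c m));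
    [apply Rmin_l|exact Hac|apply Rmax_l|].
  apply (ex_RInt_Chasles (V := R_NormedModule) _ _ 1);
    [|apply (ex_RInt_Chasles (V := R_NormedModule) _ _ m)].
  - apply ex_RInt_zero_open; [apply Rmin_r|]. intros z Hz. apply conv_integrand_zero. lra.
  - destruct (Req_dec m 1) as [->|Hm1]; [apply ex_RInt_point|].
    assert (Em : m = x - 1) by (unfold m, Rmax in *; destruct (Rle_dec 1 (x - 1)); lra).
    apply (ex_RInt_open_ext _ (fun u => density (x - u) * density u)); [lra| |].
    + intros z Hz. apply (continuous_mult (fun u => density (x - u)) density);
        [|apply continuous_density; lra].
      apply (continuous_comp (fun u => x - u) density); [|apply continuous_density; lra].
      apply (continuous_minus (fun _ => x) (fun u => u));
        [apply continuous_const|apply continuous_id].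
    + intros z Hz. unfold conv_integrand. rewrite !phi_fun_density by lra. reflexivity.
  - apply ex_RInt_zero_open; [apply Rmax_r|]. intros z Hz. apply conv_integrand_zero.
    fold m. lra.
Qed.

Lemma is_improper_int_conv x :
  is_improper_int (conv_integrand x) (RInt (conv_integrand x) 1 (Rmax 1 (x - 1))).
Proof.
  set (m := Rmax 1 (x - 1)). assert (Hm : 1 <= m) by apply Rmax_l.
  split.
  - intros a c Hac. apply integrable_on_ex_RInt, ex_RInt_conv_integrand, Hac.
  - intros eps He. exists (m + 1). intros a c Ha Hc.
    assert (Hg := ex_RInt_conv_integrand x).
    rewrite RInt_Defs by (apply Hg; lra).
    rewrite <- (RInt_Chasles _ a 1 c), <- (RInt_Chasles _ 1 m c) by (apply Hg; lra).
    rewrite (RInt_zero_open _ a 1), (RInt_zero_open _ m c); try lra;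
      [|intros z Hz; apply conv_integrand_zero; fold m; lra
       |intros z Hz; apply conv_integrand_zero; lra].
    unfold plus; simpl. rewrite Rplus_0_l, Rplus_0_r, Rminus_diag, Rabs_R0. exact He.
Qed.

Lemma RInt_density_mono B B' : 1 <= B -> B <= B' -> RInt density 1 B <= RInt density 1 B'.
Proof.
  intros HB HB'. rewrite <- (RInt_Chasles density 1 B B') by (apply ex_RInt_density; lra).
  assert (0 <= RInt density B B').
  { apply RInt_ge_0; [lra|apply ex_RInt_density; lra|intros; apply density_nonneg]. }
  unfold plus; simpl. lra.
Qed.

Lemma RInt_density_le Hm : (forall t, h t <= Hm) ->
  forall B, 1 <= B -> RInt density 1 B <= Hm / alpha.
Proof.
  intros Hb B HB.
  assert (Hp : ex_RInt (fun u => Rpower u (- alpha - 1)) 1 B)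
    by (apply (ex_RInt_open_ext _ (fun u => Rpower u (- alpha - 1)) 1 B HB); auto;
        intros z Hz; apply continuous_Rpower; lra).
  apply Rle_trans with (RInt (fun u => Hm * Rpower u (- alpha - 1)) 1 B).
  - apply RInt_le; auto.
    + apply ex_RInt_density; lra.
    + apply (ex_RInt_scal (V := R_NormedModule)), Hp.
    + intros z Hz. unfold density. replace (- 1 - alpha) with (- alpha - 1) by ring.
      rewrite Rmult_comm. apply Rmult_le_compat_r; [apply Rlt_le, exp_pos|apply Hb].
  - rewrite RInt_scal_R, RInt_Rpower_neg by (auto; lra).
    assert (E1 : Rpower 1 (- alpha) = 1) by (unfold Rpower; rewrite ln_1, Rmult_0_r; apply exp_0).
    rewrite E1. pose proof (exp_pos (- alpha * ln B)). fold (Rpower B (- alpha)) in H.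
    pose proof (Hb 0). pose proof (h_nonneg 0).
    apply (Rmult_le_reg_r alpha); [lra|]. field_simplify; nra.
Qed.

Lemma exists_improper_int_density : exists l, is_improper_int_from density 1 l /\
  (forall B, 1 <= B -> RInt density 1 B <= l) /\
  (forall eps, 0 < eps -> exists B0, 1 <= B0 /\ forall B, B0 <= B -> l - eps < RInt density 1 B).
Proof.
  destruct h_bounded as [Hm [HHm Hb]].
  set (E := fun v => exists B, 1 <= B /\ v = RInt density 1 B).
  destruct (completeness E) as [l [Hl1 Hl2]].
  { exists (Hm / alpha). intros v [B [HB ->]]. apply (RInt_density_le Hm Hb B HB). }
  { exists (RInt density 1 1), 1. split; [lra|reflexivity]. }
  assert (Up : forall B, 1 <= B -> RInt density 1 B <= l).
  { intros B HB. apply Hl1. exists B. split; [lra|reflexivity]. }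
  assert (Ev : forall eps, 0 < eps ->
    exists B0, 1 <= B0 /\ forall B, B0 <= B -> l - eps < RInt density 1 B).
  { intros eps He.
    assert (exists B0, 1 <= B0 /\ l - eps < RInt density 1 B0) as [B0 [HB0 HB0']].
    { apply Classical_Prop.NNPP. intros Hn. assert (l <= l - eps); [|lra].
      apply Hl2. intros v [B [HB ->]]. apply Rnot_lt_le. intros Hlt. apply Hn. exists B. auto. }
    exists B0. split; [exact HB0|]. intros B HB.
    pose proof (RInt_density_mono B0 B HB0 HB). lra. }
  exists l. split; [split|split; [exact Up|exact Ev]].
  - intros B HB. apply integrable_on_ex_RInt, ex_RInt_density; lra.
  - intros eps He. destruct (Ev eps He) as [N [HN1 HN]]. exists N. intros B HB.
    rewrite RInt_Defs by (apply ex_RInt_density; lra).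
    pose proof (Up B ltac:(lra)). specialize (HN B HB). rewrite Rabs_left1; lra.
Qed.

Lemma phi_le_Rpower Hm : (forall t, h t <= Hm) ->
  forall y, 1 <= y -> phi_fun alpha h y <= Hm * Rpower y (- alpha - 1).
Proof.
  intros Hb y Hy. rewrite phi_fun_ge_1, Rmult_comm by exact Hy.
  apply Rmult_le_compat_r; [apply Rlt_le, exp_pos|apply Hb].
Qed.

Lemma phi_le Hm : (forall t, h t <= Hm) -> forall y, phi_fun alpha h y <= Hm.
Proof.
  intros Hb y. pose proof (Hb 0). pose proof (h_nonneg 0).
  destruct (Rle_dec 1 y) as [Hy|Hy]; [|unfold phi_fun; destruct (Rle_dec 1 y); [contradiction|lra]].
  eapply Rle_trans; [apply (phi_le_Rpower Hm Hb y Hy)|].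
  assert (Rpower y (- alpha - 1) <= 1).
  { apply Rle_trans with (Rpower y 0); [apply Rle_Rpower; lra|rewrite Rpower_O; lra]. }
  pose proof (exp_pos ((- alpha - 1) * ln y)). fold (Rpower y (- alpha - 1)) in H2. nra.
Qed.

Lemma RInt_conv_split x A : 1 <= A -> 2 * A <= x ->
  RInt (conv_integrand x) 1 (x - 1) =
  2 * RInt (conv_integrand x) 1 A + RInt (conv_integrand x) A (x - A).
Proof.
  intros HA HAx. assert (Ig := ex_RInt_conv_integrand x).
  rewrite <- (RInt_Chasles _ 1 A (x - 1)), <- (RInt_Chasles _ A (x - A) (x - 1))
    by (apply Ig; lra).
  assert (Esym : RInt (conv_integrand x) (x - A) (x - 1) = RInt (conv_integrand x) 1 A).
  { rewrite <- (RInt_reflect (conv_integrand x) x 1 A) by (apply Ig; lra).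
    apply RInt_ext. intros z _. unfold conv_integrand.
    replace (x - (x - z)) with z by ring. apply Rmult_comm. }
  unfold plus; simpl. rewrite Esym. ring.
Qed.

Lemma RInt_conv_middle_le Hm : (forall t, h t <= Hm) ->
  forall x A, 1 <= A -> 2 * A <= x ->
  RInt (conv_integrand x) A (x - A)
    <= Hm * Hm * Rpower (x / 2) (- alpha - 1) * (2 * Rpower A (- alpha) / alpha).
Proof.
  intros Hb x A HA HAx.
  set (p := fun u => Rpower u (- alpha - 1)).
  set (K := Hm * Hm * Rpower (x / 2) (- alpha - 1)).
  assert (Hp : ex_RInt p A (x - A))
    by (apply (ex_RInt_open_ext _ p); [lra| |auto]; intros z Hz; apply continuous_Rpower; lra).
  assert (Hp' : ex_RInt (fun u => p (x - u)) A (x - A)).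
  { apply ex_RInt_swap. replace A with (x - (x - A)) at 2 by ring.
    exact (ex_RInt_reflect p x A (x - A) Hp). }
  assert (Hpp : forall u, A <= u <= x - A ->
    p (x - u) * p u <= Rpower (x / 2) (- alpha - 1) * (p u + p (x - u))).
  { intros u Hu.
    assert (H := Rpower_mul_le_mid (alpha + 1) (x - u) u ltac:(lra) ltac:(lra) ltac:(lra)).
    replace (- (alpha + 1)) with (- alpha - 1) in H by ring.
    replace ((x - u + u) / 2) with (x / 2) in H by field. unfold p. lra. }
  pose proof (Hb 0). pose proof (h_nonneg 0).
  apply Rle_trans with (RInt (fun u => K * (p u + p (x - u))) A (x - A)).
  - apply RInt_le; [lra|apply ex_RInt_conv_integrand; lra| |].
    + apply (ex_RInt_scal (V := R_NormedModule)), (ex_RInt_plus (V := R_NormedModule)); auto.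
    + intros u Hu. unfold conv_integrand.
      pose proof (phi_le_Rpower Hm Hb u ltac:(lra)).
      pose proof (phi_le_Rpower Hm Hb (x - u) ltac:(lra)).
      pose proof (phi_nonneg u). pose proof (phi_nonneg (x - u)). fold (p u) (p (x - u)) in *.
      specialize (Hpp u ltac:(lra)).
      apply Rle_trans with ((Hm * p (x - u)) * (Hm * p u)); [apply Rmult_le_compat; auto|].
      unfold K. nra.
  - rewrite RInt_scal_R by (apply (ex_RInt_plus (V := R_NormedModule)); auto).
    rewrite (RInt_plus (V := R_CompleteNormedModule) p (fun u => p (x - u))) by auto.
    unfold plus; simpl.
    assert (R1 := RInt_reflect p x A (x - A) Hp). replace (x - (x - A)) with A in R1 by ring.
    rewrite R1. unfold p. rewrite RInt_Rpower_neg by lra.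
    pose proof (exp_pos (- alpha * ln (x - A))). pose proof (exp_pos (- alpha * ln A)).
    fold (Rpower (x - A) (- alpha)) (Rpower A (- alpha)) in *.
    assert (0 <= K) by (pose proof (exp_pos ((- alpha - 1) * ln (x / 2)));
      unfold K, Rpower; apply Rmult_le_pos; nra).
    apply Rmult_le_compat_l; [lra|].
    apply (Rmult_le_reg_r alpha); [lra|]. field_simplify; lra.
Qed.

Section ConvWindow.

Variables Hm l e c q x A : R.
Hypothesis Hb : forall t, h t <= Hm.
Hypothesis He : 0 < e <= 1/4.
Hypothesis Hc : 0 < c.
Hypothesis HA : 1 <= A.
Hypothesis Hnc : nearly_const_on (phi_fun alpha h) e c q (x - A) (x + 1).
Hypothesis Hl : l - e < RInt density 1 A <= l.

Lemma RInt_phi_density : RInt (phi_fun alpha h) 1 A = RInt density 1 A.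
Proof.
  apply RInt_ext. intros z. rewrite Rmin_left by lra. intros Hz. apply phi_fun_density. lra.
Qed.

Lemma RInt_conv_edge_le : RInt (conv_integrand x) 1 A <= (1 + e) * c * l.
Proof.
  apply Rle_trans with (RInt (fun u => ((1 + e) * c) * phi_fun alpha h u) 1 A).
  - apply RInt_le; [lra|apply ex_RInt_conv_integrand; lra| |].
    + apply (ex_RInt_scal (V := R_NormedModule)), ex_RInt_phi. lra.
    + intros u Hu. unfold conv_integrand. apply Rmult_le_compat_r; [apply phi_nonneg|].
      apply Hnc. lra.
  - rewrite RInt_scal_R, RInt_phi_density by (apply ex_RInt_phi; lra).
    apply Rmult_le_compat_l; nra.
Qed.

Lemma RInt_conv_edge_ge : (1 - e) * c * (l - e - 2 * e * Hm) <= RInt (conv_integrand x) 1 A.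
Proof.
  pose proof (Hb 0). pose proof (h_nonneg 0).
  assert (SL := RInt_mul_ge_off_window (phi_fun alpha h) (fun u => phi_fun alpha h (x - u))
    1 A (x - q) e Hm ((1 - e) * c)).
  rewrite RInt_phi_density in SL.
  rewrite (RInt_ext (conv_integrand x) (fun u => phi_fun alpha h u * phi_fun alpha h (x - u)))
    by (intros; apply Rmult_comm).
  apply Rle_trans with ((1 - e) * c * (RInt density 1 A - 2 * e * Hm)).
  { apply Rmult_le_compat_l; nra. }
  apply SL; [lra|lra|nra|lra| | |].
  - intros a' c' H1 H2 H3. split; [apply ex_RInt_phi; lra|].
    apply (ex_RInt_ext (conv_integrand x)); [intros; apply Rmult_comm|].
    apply ex_RInt_conv_integrand. lra.
  - intros u Hu. split; [split; [apply phi_nonneg|apply (phi_le Hm Hb)]|apply phi_nonneg].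
  - intros u Hu Hq. apply (Hnc (x - u)); [lra|].
    replace (x - u - q) with (- (u - (x - q))) by ring. rewrite Rabs_Ropp. exact Hq.
Qed.

Lemma RInt_phi_unit_bounds :
  (1 - e) * (1 - 2 * e) * c <= RInt (phi_fun alpha h) x (x + 1) <= (1 + e) * c.
Proof.
  assert (Ix : ex_RInt (phi_fun alpha h) x (x + 1)) by (apply ex_RInt_phi; lra).
  split.
  - assert (SL := RInt_mul_ge_off_window (fun _ => 1) (phi_fun alpha h)
      x (x + 1) q e 1 ((1 - e) * c)).
    rewrite (RInt_ext (fun u => 1 * phi_fun alpha h u) (phi_fun alpha h)), RInt_const in SL
      by (intros; apply Rmult_1_l).
    change (scal (x + 1 - x) 1) with ((x + 1 - x) * 1) in SL.
    apply Rle_trans with ((1 - e) * c * ((x + 1 - x) * 1 - 2 * e * 1)); [right; ring|].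
    apply SL; [lra|lra|nra|lra| | |].
    + intros a' c' H1 H2 H3. split; [apply ex_RInt_const|].
      apply (ex_RInt_ext (phi_fun alpha h)); [intros; symmetry; apply Rmult_1_l|].
      apply ex_RInt_phi. lra.
    + intros u Hu. split; [lra|apply phi_nonneg].
    + intros u Hu Hq. apply Hnc; [lra|exact Hq].
  - eapply Rle_trans; [apply (RInt_le_const _ x (x + 1) ((1 + e) * c)); auto; try lra|lra].
    intros z Hz. apply Hnc. lra.
Qed.

Lemma conv_window_ratio : 0 < l -> 0 <= Hm -> 2 * A <= x ->
  RInt (conv_integrand x) A (x - A) <= e * c ->
  Rabs ((2 * RInt (conv_integrand x) 1 A + RInt (conv_integrand x) A (x - A))
        / (2 * l * RInt (phi_fun alpha h) x (x + 1)) - 1)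
    <= e * (2 * (8 * l + 2 + 4 * Hm) / l).
Proof.
  intros Hl_pos HHm HAx Mid.
  pose proof RInt_conv_edge_le. pose proof RInt_conv_edge_ge. pose proof RInt_phi_unit_bounds.
  assert (0 <= RInt (conv_integrand x) A (x - A)).
  { apply RInt_ge_0; [lra|apply ex_RInt_conv_integrand; lra|].
    intros u _. apply Rmult_le_pos; apply phi_nonneg. }
  apply (ratio_near_1 l Hm c e); lra.
Qed.

End ConvWindow.

(* The middle part is [O(x^(-alpha-1) x^(-alpha th))], negligible against
   [x^(-alpha-1) / ln x]. *)
Lemma RInt_conv_middle_small Hm e th :
  0 < Hm -> (forall t, h t <= Hm) -> 0 < e -> 0 < th < 1 ->
  at_top (fun x => RInt (conv_integrand x) (Rpower x th) (x - Rpower x th)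
    <= e * (Rpower x (- alpha - 1) * / ln x)).
Proof.
  intros HHm Hb He Hth.
  set (Bm := Hm * Hm * Rpower (/ 2) (- alpha - 1) * (2 / alpha)).
  assert (HBm : 0 < Bm).
  { pose proof (exp_pos ((- alpha - 1) * ln (/ 2))). fold (Rpower (/ 2) (- alpha - 1)) in H.
    unfold Bm. apply Rmult_lt_0_compat; [apply Rmult_lt_0_compat; [nra|lra]|].
    apply Rdiv_lt_0_compat; lra. }
  assert (Hev := filter_and (F := at_top) _ _ (eventually_ge 2)
    (filter_and (F := at_top) _ _ (eventually_Rpower_ge th 1 ltac:(lra))
    (filter_and (F := at_top) _ _ (eventually_Rpower_le_mul th (1/2) ltac:(lra) ltac:(lra))
      (eventually_ln_mul_Rpower_le (alpha * th) (e / Bm) ltac:(nra)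
        ltac:(apply Rdiv_lt_0_compat; lra))))).
  revert Hev. apply filter_imp. intros x [Hx [HA [HAx Hsmall]]].
  assert (HL : 0 < ln x) by (rewrite <- ln_1; apply ln_increasing; lra).
  eapply Rle_trans; [apply (RInt_conv_middle_le Hm Hb x); lra|].
  assert (E1 : Rpower (x / 2) (- alpha - 1) = Rpower x (- alpha - 1) * Rpower (/ 2) (- alpha - 1))
    by (symmetry; apply Rpower_mult_distr; lra).
  rewrite E1, Rpower_mult. replace (th * - alpha) with (- (alpha * th)) by ring.
  set (X := Rpower x (- (alpha * th))) in *. set (Px := Rpower x (- alpha - 1)).
  assert (HPx : 0 < Px) by apply exp_pos.
  assert (HX : Bm * X <= e / ln x).
  { apply (Rmult_le_reg_r (ln x)); [lra|]. replace (e / ln x * ln x) with e by (field; lra).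
    apply (Rmult_le_compat_l Bm) in Hsmall; [|lra].
    replace (Bm * (e / Bm)) with e in Hsmall by (field; lra). lra. }
  replace (Hm * Hm * (Px * Rpower (/ 2) (- alpha - 1)) * (2 * X / alpha)) with (Px * (Bm * X))
    by (unfold Bm; field; lra).
  apply Rle_trans with (Px * (e / ln x)); [apply Rmult_le_compat_l; lra|].
  right. field. lra.
Qed.

Lemma M_const_spec : is_improper_int_from density 1 (M_const alpha h) /\
  (forall B, 1 <= B -> RInt density 1 B <= M_const alpha h) /\
  (forall eps, 0 < eps -> exists B0, 1 <= B0 /\
     forall B, B0 <= B -> M_const alpha h - eps < RInt density 1 B).
Proof.
  destruct exists_improper_int_density as [l [Hl Hrest]].
  assert (E : M_const alpha h = l) by (apply improper_int_from_eq, Hl).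
  rewrite E. split; [exact Hl|exact Hrest].
Qed.

Lemma M_const_pos : 0 < M_const alpha h.
Proof.
  destruct M_const_spec as [_ [Up _]].
  apply Rlt_le_trans with (RInt density 1 x0); [|apply Up; lra].
  apply RInt_gt_0; [lra| |intros z Hz; apply continuous_density; lra].
  intros z Hz. apply Rmult_lt_0_compat; [apply exp_pos|apply Hpos; lra].
Qed.

Lemma conv_phi_eq x : conv (phi_fun alpha h) (phi_fun alpha h) x
  = RInt (conv_integrand x) 1 (Rmax 1 (x - 1)).
Proof. apply improper_int_eq, is_improper_int_conv. Qed.

Lemma conv_phi_asymp : asymp (conv (phi_fun alpha h) (phi_fun alpha h))
  (fun x => 2 * M_const alpha h * Defs.RInt (phi_fun alpha h) x (x + 1)).
Proof.
  destruct M_const_spec as [_ [Up Ev]]. pose proof M_const_pos as Hl.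
  set (l := M_const alpha h) in *.
  destruct h_bounded as [Hm [HHm Hb]].
  intros eps Heps.
  set (K := 2 * (8 * l + 2 + 4 * Hm) / l).
  assert (HK : 0 < K) by (apply Rdiv_lt_0_compat; lra).
  set (e := Rmin (1/4) (eps / (2 * K))).
  assert (He : 0 < e <= 1/4)
    by (split; [apply Rmin_glb_lt; [|apply Rdiv_lt_0_compat]|apply Rmin_l]; lra).
  assert (HeK : e * K < eps).
  { apply Rle_lt_trans with (eps / (2 * K) * K); [apply Rmult_le_compat_r; [lra|apply Rmin_r]|].
    replace (eps / (2 * K) * K) with (eps / 2) by (field; lra). lra. }
  destruct (phi_nearly_const e) as [th [Hth Hev]]; [lra|].
  destruct (Ev e (proj1 He)) as [B0 [HB0 HlB0]].
  assert (Hev2 := filter_and (F := at_top) _ _ Hev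
    (filter_and (F := at_top) _ _ (eventually_Rpower_le_mul th (1/4) ltac:(lra) ltac:(lra))
    (filter_and (F := at_top) _ _ (eventually_Rpower_ge th B0 ltac:(lra))
      (RInt_conv_middle_small Hm e th HHm Hb ltac:(lra) ltac:(lra))))).
  destruct Hev2 as [N HN]. exists (N + 1). intros x Hx.
  destruct (HN x ltac:(lra)) as [[Hx2 [c [q [Hc Hnc]]]] [HA4 [HAB Mid]]].
  set (A := Rpower x th) in *.
  assert (HL : 0 < ln x) by (rewrite <- ln_1; apply ln_increasing; lra).
  assert (Hc0 : 0 < c).
  { eapply Rlt_le_trans; [|exact Hc].
    apply Rmult_lt_0_compat; [apply exp_pos|apply Rinv_0_lt_compat, HL]. }
  assert (HlA : l - e < RInt density 1 A <= l) by (split; [apply HlB0|apply Up]; lra).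
  rewrite conv_phi_eq, Rmax_right, (RInt_conv_split x A), RInt_Defs
    by (try apply ex_RInt_phi; lra).
  eapply Rle_lt_trans; [|exact HeK].
  apply (conv_window_ratio Hm l e c q x A Hb He Hc0 ltac:(lra) Hnc HlA); try lra.
  eapply Rle_trans; [exact Mid|]. apply Rmult_le_compat_l; lra.
Qed.

End LogPeriodic.

(* Re-import [Defs] so that [RInt] below is its Riemann integral, not Coquelicot's. *)
Import Defs.

Theorem lemma3p2 (b x0 delta alpha : R) (h : R -> R)
  (Hx0 : 1 < x0) (Hx0b : x0 < b)
  (Hd0 : 0 < delta) (Hd1 : delta < x0 - 1) (Hd2 : delta < b - x0)
  (Hcont : continuity h)
  (Hper : forall t, h (t + ln b) = h t)
  (Hpos : forall x, 1 <= x <= b -> x <> x0 -> 0 < h (ln x))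
  (Hzero : h (ln x0) = 0)
  (Hnear : forall x, 0 < Rabs (x - x0) < delta ->
             h (ln x) = - / ln (Rabs (x - x0)))
  (Halpha : 0 < alpha) :
  is_improper_int_from (fun x => Rpower x (- 1 - alpha) * h (ln x)) 1
      (M_const alpha h) /\
  (forall x, is_improper_int (fun u => phi_fun alpha h (x - u) * phi_fun alpha h u)
      (conv (phi_fun alpha h) (phi_fun alpha h) x)) /\
  (forall x, integrable_on (phi_fun alpha h) x (x + 1)) /\
  asymp (conv (phi_fun alpha h) (phi_fun alpha h))
        (fun x => 2 * M_const alpha h * RInt (phi_fun alpha h) x (x + 1)) /\
  (forall x, 2 * M_const alpha h * RInt (phi_fun alpha h) x (x + 1)
             = 2 * (M_const alpha h) ^ 2 * mu_Ioc alpha h x (x + 1)).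
Proof.
  split; [exact (proj1 (M_const_spec b x0 alpha h Hx0 Hx0b Hcont Hper Hpos Hzero Halpha))|].
  split.
  { intros x. rewrite (conv_phi_eq alpha h Hcont). exact (is_improper_int_conv alpha h Hcont x). }
  split.
  { intros x. apply integrable_on_ex_RInt, (ex_RInt_phi alpha h Hcont). lra. }
  split.
  { exact (conv_phi_asymp b x0 delta alpha h Hx0 Hx0b Hd0 Hd1 Hd2 Hcont Hper Hpos Hzero Hnear
      Halpha). }
  intros x. unfold mu_Ioc. field. apply Rgt_not_eq.
  exact (M_const_pos b x0 delta alpha h Hx0 Hx0b Hd0 Hd2 Hcont Hper Hpos Hzero Halpha).
Qed.
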